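(* Let $q$ be a prime power with $q\equiv 3\pmod 4$ and $q>7$, and let $BP(q)$ be the bi-Paley graph. Then any two distinct vertices of the same colour are determined by their $\tfrac14(q-3)$ common neighbours: if $u,v$ and $u',v'$ are two pairs of distinct vertices of the same colour with the same set of common neighbours, then $\{u,v\}=\{u',v'\}$. Equivalently, there are no three distinct vertices of the same colour all adjacent to the common neighbours of two of them.
   Context: Let $\mathbb{F}$ be the field with $q$ elements. The bi-Paley graph $BP(q)$ is the bipartite graph on two copies $\mathbb{F}_\bullet$ and $\mathbb{F}_\circ$ of $\mathbb{F}$, in which $x_\bullet$ is adjacent to $y_\circ$ if and only if $y-x$ is a non-zero square in $\mathbb{F}$. Any two distinct vertices of the same colour in $BP(q)$ have exactly $\tfrac14(q-3)$ common neighbours. *)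

From HB Require Import structures.
From mathcomp Require Import all_boot all_order all_algebra all_field.
Set Implicit Arguments. Unset Strict Implicit. Unset Printing Implicit Defensive.
Import GRing.Theory.
Local Open Scope ring_scope.

(* Vertices of BP(q): a pair (c, x) with c : bool the colour
   (true = black copy F_bullet, false = white copy F_circ) and x : F. *)
Definition bp_vertex (F : finFieldType) := (bool * F)%type.

Definition nzsq (F : finFieldType) (z : F) : bool :=
  (z != 0) && [exists w : F, w ^+ 2 == z].

Definition bp_adj (F : finFieldType) (a b : bp_vertex F) : bool :=
  (a.1 && ~~ b.1 && nzsq (b.2 - a.2)) || (b.1 && ~~ a.1 && nzsq (a.2 - b.2)).

Definition bp_common (F : finFieldType) (u v : bp_vertex F) : {set bp_vertex F} :=
  [set w | bp_adj u w && bp_adj v w].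

From HB Require Import structures.
From mathcomp Require Import all_boot all_order all_algebra all_field.
From mathcomp Require Import zify ring.
Set Implicit Arguments. Unset Strict Implicit. Unset Printing Implicit Defensive.
Import GRing.Theory Num.Theory.
Local Open Scope ring_scope.

(* Let chi be the quadratic character of F, q = #|F| = 3 mod 4 (so chi (-1) = -1),
   and T c = \sum_w chi (w - a) * chi (w - b) * chi (w - c) for fixed a != b.
   Two same-coloured vertices a, b are recovered from their common neighbours
   once no c outside {a, b} has w - c a nonzero square whenever w - a and w - b
   are.  For such a c the product (1 + chi (w - a)) (1 + chi (w - b)) (1 - chi (w - c))
   vanishes off {a, b}, and summing it over w with \sum_w chi (w - a) = 0 and
   \sum_w chi (w - a) chi (w - b) = -1 yields T c >= q - 3.  The reflection
   w |-> a + b - w gives T (a + b - c) = - T c, while a Parseval identity gives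
   \sum_c (T c)^2 = q (q - 2) - 1; hence 2 (q - 3)^2 <= q (q - 2) - 1, i.e. q <= 7. *)

(* Integer-valued, so that character sums live in an ordered ring. *)
Definition chi (F : finFieldType) (x : F) : int :=
  if x == 0 then 0 else if nzsq x then 1 else -1.

Section FiniteFieldCard.

Variable F : finFieldType.

Lemma natr_card : (#|F|%:R : F) = 0.
Proof.
have shift1 : \sum_(x : F) (x + 1) = \sum_(x : F) x.
  by rewrite [RHS](reindex_inj (addIr (1 : F))).
move: shift1; rewrite big_split /= sumr_const => shift1.
by apply: (addrI (\sum_(x : F) x)); rewrite addr0 -[RHS]shift1.
Qed.

Lemma odd_card_two_neq0 : odd #|F| -> (2%:R : F) != 0.
Proof.
move=> oddF; apply/eqP => two0; have := natr_card.
rewrite -[#|F|]odd_double_half oddF -mul2n natrD natrM two0 mul0r addr0.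
by move/eqP; rewrite oner_eq0.
Qed.

End FiniteFieldCard.

Lemma sumr_indicator (R : pzSemiRingType) (T : finType) (P : pred T) :
  \sum_(x : T) (P x)%:R = #|P|%:R :> R.
Proof. by rewrite -natr_sum -sum1_card; congr _%:R; rewrite [RHS]big_mkcond. Qed.

Section QuadraticCharacter.

Variable F : finFieldType.
Hypothesis two_neq0 : (2%:R : F) != 0.

Local Notation m := #|[set x : F | nzsq x]|.

Lemma nzsq_neq0 (x : F) : nzsq x -> x != 0.
Proof. by case/andP. Qed.

Lemma card_sqrt (z : F) :
  #|[set y : F | y ^+ 2 == z]| = if z == 0 then 1%N else if nzsq z then 2%N else 0%N.
Proof.
have [->|z0] := eqVneq z 0.
  by rewrite -(cards1 (0 : F)); apply: eq_card => y; rewrite !inE expf_eq0.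
rewrite /nzsq z0 /=; case: existsP => [[y /eqP yz]|no_root]; last first.
  apply/eqP; rewrite cards_eq0; apply/eqP/setP => y; rewrite !inE.
  by apply/negbTE/negP => yz; apply: no_root; exists y.
have y0 : y != 0 by apply: contraNneq z0 => y0; rewrite -yz y0 expr0n.
have y_neq_Ny : y != - y.
  apply: contraNneq y0 => yNy.
  have : 2%:R * y == 0 by rewrite mulr_natl mulr2n {1}yNy addNr.
  by rewrite mulf_eq0 (negbTE two_neq0).
transitivity #|[set y; - y]|; last by rewrite cards2 y_neq_Ny.
by apply: eq_card => x; rewrite !inE -yz eqf_sqr.
Qed.

Lemma card_nzsq : #|F| = m.*2.+1.
Proof.
have -> : #|F| = (\sum_(z : F) #|[set y : F | y ^+ 2 == z]|)%N.
  rewrite -sum1_card (partition_big (fun y : F => y ^+ 2) predT) //=.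
  by apply: eq_bigr => z _; rewrite sum1dep_card; apply: eq_card => y; rewrite inE.
rewrite (bigD1 0) //= card_sqrt eqxx.
rewrite (eq_bigr (fun z => if nzsq z then 2%N else 0%N)); last first.
  by move=> z /negbTE z0; rewrite card_sqrt z0.
rewrite -big_mkcondr /= (eq_bigl (fun z => nzsq z)) => [|z]; last first.
  by case: (boolP (nzsq z)) => [/nzsq_neq0 ->|_]; rewrite ?andbF.
by rewrite sum_nat_const cardsE muln2.
Qed.

Lemma card_nzsq_gt0 : (0 < m)%N.
Proof.
apply/card_gt0P; exists 1; rewrite inE /nzsq oner_neq0.
by apply/existsP; exists 1; rewrite expr1n.
Qed.

Lemma expr_card_nzsq_double (x : F) : x != 0 -> x ^+ m.*2 = 1.
Proof. by move=> x0; apply: (mulfI x0); rewrite mulr1 -exprS -card_nzsq expf_card. Qed.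

Lemma expr_card_nzsq (x : F) : nzsq x -> x ^+ m = 1.
Proof.
case/andP=> x0 /existsP[y /eqP yx].
have y0 : y != 0 by apply: contraNneq x0 => y0; rewrite -yx y0 expr0n.
by rewrite -yx -exprM mul2n expr_card_nzsq_double.
Qed.

(* Euler's criterion: the [m] nonzero squares are all the roots of ['X^m - 1]. *)
Lemma nzsqE (x : F) : nzsq x = (x ^+ m == 1).
Proof.
set R := [set x : F | x ^+ m == 1].
have sq_sub_R : [set x : F | nzsq x] \subset R.
  by apply/subsetP => y; rewrite !inE => /expr_card_nzsq ->.
have card_R : (#|R| <= m)%N.
  have p0 : ('X^m - 1 : {poly F}) != 0.
    by rewrite -size_poly_eq0 size_XnsubC ?card_nzsq_gt0.
  rewrite cardE -ltnS -(size_XnsubC (1 : F) card_nzsq_gt0).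
  apply: max_poly_roots p0 _ (enum_uniq _).
  by apply/allP => y; rewrite mem_enum inE rootE !hornerE subr_eq0.
have card_eq : m = #|R| by apply/eqP; rewrite eqn_leq subset_leq_card.
by move/(subset_cardP card_eq)/(_ x): sq_sub_R; rewrite !inE.
Qed.

Lemma chi_sign (x : F) : chi x \in [:: -1; 0; 1].
Proof. by rewrite /chi; case: (x == 0); case: (nzsq x). Qed.

Lemma intr_sign_inj (i j : int) : i \in [:: -1; 0; 1] -> j \in [:: -1; 0; 1] ->
  (i%:~R : F) = j%:~R -> i = j.
Proof.
have N1_neq1 : (-1 : F) != 1.
  by apply: contra two_neq0 => /eqP N1; rewrite mulr2n -{1}N1 addNr.
pose sign_of (y : F) : int := if y == 0 then 0 else if y == 1 then 1 else -1.
have sign_ofK : {in [:: -1; 0; 1], cancel (fun k : int => k%:~R) sign_of}.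
  move=> k; rewrite !inE => /or3P[]/eqP->; rewrite /sign_of /= ?rmorphN ?rmorph1 ?rmorph0.
  - by rewrite oppr_eq0 oner_eq0 (negbTE N1_neq1).
  - by rewrite eqxx.
  - by rewrite oner_eq0 eqxx.
exact: (can_in_inj sign_ofK).
Qed.

Lemma chiE (x : F) : (chi x)%:~R = x ^+ m.
Proof.
rewrite /chi; have [->|x0] := eqVneq x 0; first by rewrite expr0n gtn_eqF ?card_nzsq_gt0.
rewrite nzsqE; case: eqP => [->//|x_m_neq1].
have /eqP := expr_card_nzsq_double x0.
by rewrite -muln2 exprM sqrf_eq1 => /orP[/eqP//|/eqP->]; rewrite rmorphN1.
Qed.

Lemma chiM (x y : F) : chi (x * y) = chi x * chi y.
Proof.
apply: intr_sign_inj; rewrite ?chi_sign ?rmorphM /= ?chiE ?exprMn //.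
by move: (chi_sign x) (chi_sign y); rewrite !inE => /or3P[]/eqP-> /or3P[]/eqP->.
Qed.

Lemma chiN1E : chi (-1 : F) = (-1) ^+ m.
Proof.
apply: intr_sign_inj; rewrite ?chi_sign ?chiE ?rmorphXn ?rmorphN1 //.
by rewrite -signr_odd; case: odd.
Qed.

Lemma chi_sqr (x : F) : chi x ^+ 2 = (x != 0)%:R.
Proof. by rewrite /chi; case: (x == 0); case: (nzsq x). Qed.

Lemma chi1 : chi (1 : F) = 1.
Proof.
rewrite /chi oner_eq0 /nzsq oner_neq0 /=.
by case: existsP => // -[]; exists 1; rewrite expr1n.
Qed.

Lemma sum_chi : \sum_(x : F) chi x = 0.
Proof.
have chi_count (x : F) : chi x = (nzsq x)%:R *+ 2 - (x != 0)%:R.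
  by rewrite /chi; case: eqVneq => [->|/negbTE x0]; [rewrite /nzsq eqxx | case: nzsq].
rewrite (eq_bigr _ (fun x _ => chi_count x)) sumrB sumrMnl !sumr_indicator.
by rewrite cardC1 card_nzsq cardsE /= -muln2 natrM mulr_natr subrr.
Qed.

Lemma sum_chi_shift (a : F) : \sum_(w : F) chi (w - a) = 0.
Proof. by rewrite (reindex_inj (addIr a)) /=; under eq_bigr do rewrite addrK; exact: sum_chi. Qed.

Lemma sum_chi_mul_shift0 (d : F) : d != 0 -> \sum_(u : F) chi u * chi (u - d) = -1.
Proof.
move=> d0.
have term u : chi u * chi (u - d) = chi (1 - d / u) - (u == 0)%:R.
  have [->|u0] := eqVneq u 0; first by rewrite invr0 mulr0 subr0 chi1 /chi eqxx mul0r subrr.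
  rewrite -chiM (_ : u * (u - d) = u ^+ 2 * (1 - d / u)); last by field.
  by rewrite chiM expr2 chiM -expr2 chi_sqr u0 mul1r subr0.
have inj : injective (fun u : F => 1 - d / u).
  by move=> u v /addrI/oppr_inj/(mulfI d0)/invr_inj.
have sum_shifted := sum_chi; rewrite (reindex_inj inj) /= in sum_shifted.
by rewrite (eq_bigr _ (fun u _ => term u)) sumrB sum_shifted sumr_indicator card1 sub0r.
Qed.

Lemma sum_chi_mul_shift (a b : F) :
  \sum_(w : F) chi (w - a) * chi (w - b) = #|F|%:R * (a == b)%:R - 1.
Proof.
have [<-|ab] := eqVneq a b.
  under eq_bigr do rewrite -expr2 chi_sqr subr_eq0.
  by rewrite sumr_indicator cardC1 card_nzsq /= mulr1 -addn1 natrD addrK.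
rewrite mulr0 sub0r -(@sum_chi_mul_shift0 (b - a)) ?subr_eq0 1?eq_sym //.
rewrite (reindex_inj (addIr a)) /=; apply: eq_bigr => w _.
by rewrite addrK opprB addrA.
Qed.

Lemma sum_sqr_chi_conv (G : F -> int) :
  \sum_(c : F) (\sum_(w : F) G w * chi (w - c)) ^+ 2
  = #|F|%:R * \sum_(w : F) G w ^+ 2 - (\sum_(w : F) G w) ^+ 2.
Proof.
have corr w w' : \sum_(c : F) chi (w - c) * chi (w' - c) = #|F|%:R * (w == w')%:R - 1.
  by rewrite -sum_chi_mul_shift; apply: eq_bigr => c _; rewrite -!chiM; congr chi; ring.
have sqr_conv c : (\sum_w G w * chi (w - c)) ^+ 2
    = \sum_w \sum_w' G w * G w' * (chi (w - c) * chi (w' - c)).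
  rewrite expr2 mulr_suml; apply: eq_bigr => w _.
  by rewrite mulr_sumr; apply: eq_bigr => w' _; ring.
have diag w : \sum_w' G w * G w' * (#|F|%:R * (w == w')%:R - 1)
    = #|F|%:R * G w ^+ 2 - G w * \sum_w' G w'.
  rewrite (bigD1 w) //= eqxx mulr1 mulr_sumr [X in _ = _ - X](bigD1 w) //=.
  rewrite (eq_bigr (fun w' => - (G w * G w'))) => [|w' /negbTE]; last first.
    by rewrite eq_sym => ->; rewrite mulr0 sub0r mulrN1.
  by rewrite sumrN; ring.
rewrite (eq_bigr _ (fun c _ => sqr_conv c)) exchange_big /=.
under eq_bigr do rewrite exchange_big /=.
under eq_bigr do under eq_bigr do rewrite -mulr_sumr corr.
by rewrite (eq_bigr _ (fun w _ => diag w)) sumrB -mulr_sumr -mulr_suml expr2.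
Qed.

Lemma chi_nzsq (x : F) : nzsq x -> chi x = 1.
Proof. by move=> sq_x; rewrite /chi sq_x (negbTE (nzsq_neq0 sq_x)). Qed.

Definition chi_triple (a b c : F) : int :=
  \sum_(w : F) chi (w - a) * chi (w - b) * chi (w - c).

Lemma sum_chi_shift_prod (a b c : F) : a != b -> c != a -> c != b ->
  \sum_(w : F) (1 + chi (w - a)) * (1 + chi (w - b)) * (1 - chi (w - c))
  = #|F|%:R + 1 - chi_triple a b c.
Proof.
move=> ab ca cb; rewrite /chi_triple.
rewrite (eq_bigr (fun w => 1 + chi (w - a) + chi (w - b) - chi (w - c)
  + chi (w - a) * chi (w - b) - chi (w - a) * chi (w - c) - chi (w - b) * chi (w - c)
  - chi (w - a) * chi (w - b) * chi (w - c))) => [|w _]; last by ring.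
rewrite !big_split !sumrN /= sumr_const !sum_chi_shift !sum_chi_mul_shift.
by rewrite (negbTE ab) ![_ == c]eq_sym (negbTE ca) (negbTE cb) mulr0; ring.
Qed.

Lemma sum_chi_triple_sqr (a b : F) : a != b ->
  \sum_(c : F) chi_triple a b c ^+ 2 = #|F|%:R * (#|F|%:R - 2) - 1.
Proof.
move=> ab; rewrite (sum_sqr_chi_conv (fun w => chi (w - a) * chi (w - b))).
rewrite sum_chi_mul_shift (negbTE ab) mulr0 sub0r.
rewrite (eq_bigr (fun w => 1 - (w == a)%:R - (w == b)%:R)) => [|w _].
  by rewrite !sumrB sumr_const !sumr_indicator !card1; ring.
rewrite exprMn !chi_sqr !subr_eq0.
have [->|_] := eqVneq w a; [rewrite (negbTE ab) | case: (w == b)];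
  by rewrite /= ?mulr0 ?mul0r ?mulr1 ?subr0 ?subrr.
Qed.

Section MinusOneNonSquare.

Hypothesis chiN1 : chi (-1 : F) = -1.

Lemma chiN (x : F) : chi (- x) = - chi x.
Proof. by rewrite -mulN1r chiM chiN1 mulN1r. Qed.

Lemma chi_triple_reflect (a b c : F) : chi_triple a b (a + b - c) = - chi_triple a b c.
Proof.
have reflect_inj : injective (fun v : F => a + b - v) by move=> v v' /addrI/oppr_inj.
rewrite /chi_triple (reindex_inj reflect_inj) -sumrN; apply: eq_bigr => v _ /=.
rewrite (_ : a + b - v - a = - (v - b)) 1?(_ : a + b - v - b = - (v - a)); try ring.
by rewrite (_ : a + b - v - (a + b - c) = - (v - c)) ?chiN; ring.
Qed.

Lemma chi_triple_ge (a b c : F) : a != b -> c != a -> c != b ->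
  (forall w, nzsq (w - a) -> nzsq (w - b) -> nzsq (w - c)) ->
  #|F|%:R - 3 <= chi_triple a b c.
Proof.
move=> ab ca cb implied.
pose E w := (1 + chi (w - a)) * (1 + chi (w - b)) * (1 - chi (w - c)).
have E0 w : w != a -> w != b -> E w = 0.
  move=> wa wb; rewrite /E.
  have [sq_a|nsq_a] := boolP (nzsq (w - a)); last first.
    by rewrite {1}/chi subr_eq0 (negbTE wa) (negbTE nsq_a) addrN !mul0r.
  have [sq_b|nsq_b] := boolP (nzsq (w - b)); last first.
    by rewrite [chi (w - b)]/chi subr_eq0 (negbTE wb) (negbTE nsq_b) addrN mulr0 mul0r.
  by rewrite (chi_nzsq (implied w sq_a sq_b)) subrr mulr0.
have Eab : E a + E b <= 4.
  rewrite /E !subrr -(opprB a b) chiN [chi 0]/chi eqxx.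
  by move: (chi_sign (a - b)) (chi_sign (a - c)) (chi_sign (b - c));
    rewrite !inE => /or3P[]/eqP-> /or3P[]/eqP-> /or3P[]/eqP->.
have := sum_chi_shift_prod ab ca cb.
rewrite (bigD1 a) //= (bigD1 b) 1?eq_sym //= big1 ?addr0 => [|w /andP[wb wa]]; last exact: E0.
by rewrite -/(E a) -/(E b) => sumE; move: Eab; rewrite sumE; lia.
Qed.

Lemma nzsq_shift_implied (a b c : F) : (7 < #|F|)%N -> a != b ->
  (forall w, nzsq (w - a) -> nzsq (w - b) -> nzsq (w - c)) -> (c == a) || (c == b).
Proof.
move=> F_gt7 ab implied; apply: contraT; rewrite negb_or => /andP[ca cb].
have T_ge := chi_triple_ge ab ca cb implied.
have T_reflect := chi_triple_reflect a b c.
have [c_fixed|c_moved] := eqVneq (a + b - c) c.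
  by move: T_reflect; rewrite c_fixed; lia.
have := sum_chi_triple_sqr ab.
rewrite (bigD1 c) //= (bigD1 (a + b - c)) //= T_reflect addrA => sum_sqr.
have rest_ge0 : 0 <= \sum_(c' | (c' != c) && (c' != a + b - c)) chi_triple a b c' ^+ 2.
  by apply: sumr_ge0 => c' _; exact: sqr_ge0.
have q_ge8 : 8 <= #|F|%:R :> int by rewrite ler_nat.
move: sum_sqr rest_ge0 T_ge q_ge8; rewrite !expr2.
move: (chi_triple a b c) (#|F|%:R : int) (\sum_(_ | _) _) => t q rest; nia.
Qed.

End MinusOneNonSquare.
End QuadraticCharacter.

Section ThreeModFour.

Variable F : finFieldType.
Hypothesis F_mod4 : (#|F| %% 4 = 3)%N.

Lemma two_neq0_mod4 : (2%:R : F) != 0.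
Proof. by apply: odd_card_two_neq0; lia. Qed.

Lemma chiN1_mod4 : chi (-1 : F) = -1.
Proof.
rewrite chiN1E ?two_neq0_mod4 // -signr_odd.
move: F_mod4; rewrite (card_nzsq two_neq0_mod4); move: #|_| => m m_mod4.
by have -> : odd m by lia.
Qed.

End ThreeModFour.

Lemma bp_adjE (F : finFieldType) (col col' : bool) (a w : F) :
  bp_adj (col, a) (col', w) = (col' == ~~ col) && nzsq (if col then w - a else a - w).
Proof. by rewrite /bp_adj; case: col; case: col'; rewrite /= ?orbF. Qed.

Section BiPaley.

Variable F : finFieldType.
Hypotheses (F_mod4 : (#|F| %% 4 = 3)%N) (F_gt7 : (7 < #|F|)%N).

Lemma bp_common_colour (u v w : bp_vertex F) : w \in bp_common u v -> w.1 = ~~ u.1.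
Proof. by case: u w => [cu a] [cw w]; rewrite inE bp_adjE => /andP[/andP[/eqP-> _] _]. Qed.

Lemma bp_common_sub_adj (u v x : bp_vertex F) : u != v -> u.1 = v.1 -> x.1 = u.1 ->
  {subset bp_common u v <= [pred w | bp_adj x w]} -> x \in [set u; v].
Proof.
case: u v x => [col a] [col' b] [col'' c] /= uv col_eq col''_eq sub; subst col' col''.
have ab : a != b by apply: contraNneq uv => ->.
suff : (c == a) || (c == b) by rewrite !inE !xpair_eqE eqxx.
have implied (a' b' c' : F) :=
  @nzsq_shift_implied F (two_neq0_mod4 F_mod4) (chiN1_mod4 F_mod4) a' b' c' F_gt7.
case: col {uv} sub => sub.
  apply: implied ab _ => w sq_a sq_b.
  by have := sub (false, w); rewrite !inE !bp_adjE /= sq_a sq_b => /(_ isT).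
(* On the white side a - w = (- w) - (- a). *)
rewrite -!(eqr_opp c); apply: implied; first by rewrite eqr_opp.
move=> w; rewrite !opprK ![w + _]addrC => sq_a sq_b.
by have := sub (true, - w); rewrite !inE !bp_adjE /= !opprK sq_a sq_b => /(_ isT).
Qed.

Lemma bp_common_neq0 (u v : bp_vertex F) : u != v -> u.1 = v.1 -> bp_common u v != set0.
Proof.
move=> uv uv1; apply/eqP => common0.
have /subsetPn[c _ c_new] : ~~ ([set: F] \subset [set u.2; v.2]).
  apply/negP => /subset_leq_card; rewrite cardsT cards2 => le.
  by have := leq_trans F_gt7 le; case: (u.2 != v.2).
have c_uv : (u.1, c) \in [set u; v].
  by apply: bp_common_sub_adj uv uv1 _ _ => // w; rewrite common0 inE.
move: c_new c_uv; case: u v {uv common0} uv1 => [cu a] [cv b] /= <-.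
by rewrite !inE !xpair_eqE eqxx => /negPf->.
Qed.

End BiPaley.

Local Close Scope ring_scope.

Theorem mainTheorem10 (F : finFieldType) (q : nat) (hq : #|F| = q)
  (hq4 : q %% 4 = 3) (hq7 : 7 < q)
  (u v u' v' : bp_vertex F) :
  u != v -> u.1 = v.1 -> u' != v' -> u'.1 = v'.1 ->
  bp_common u v = bp_common u' v' ->
  [set u; v] = [set u'; v'].
Proof.
subst q => uv uv1 uv' uv'1 common_eq.
have /set0Pn[w w_uv] := bp_common_neq0 hq4 hq7 uv uv1.
have w_uv' : w \in bp_common u' v' by rewrite -common_eq.
have u'1 : u'.1 = u.1.
  by apply: negb_inj; rewrite -(bp_common_colour w_uv') (bp_common_colour w_uv).
have sub : [set u'; v'] \subset [set u; v].
  apply/subsetP => x x_uv'; apply: (bp_common_sub_adj hq4 hq7 uv uv1).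
    by move: x_uv'; rewrite !inE => /orP[]/eqP->; rewrite -?uv'1 u'1.
  by rewrite common_eq => w'; move: x_uv'; rewrite !inE => /orP[]/eqP-> /andP[].
by apply/eqP; rewrite eq_sym eqEcard sub !cards2 uv uv'.
Qed.
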